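(* Let $\hat{Y}$, $\hat{A}$, $A$ be random variables on a common probability space, where $\hat{Y}$ takes values in a finite set $\mathcal{Y}$ and $A,\hat{A}$ take values in a common finite set $\mathcal{A}$. Identify values with their one-hot vectors, use the $\ell_p$-norm ($p\ge1$) as ground metric, and for pairs use the $\ell_p$-norm of the concatenated one-hot vectors. Then $$I_W(\hat{Y},A)\le I_W(\hat{Y},\hat{A})+2\sqrt[p]{2}\,\mathbb{P}(A\neq\hat{A}).$$
   Context: For random variables $U,V$, the Wasserstein Dependency Measure is $I_W(U,V)=W_1(p(U,V),p(U)p(V))$, where $W_1$ is the 1-Wasserstein distance with respect to the ground metric, $p(U,V)$ the joint law and $p(U)p(V)$ the product of the marginals. Interpretation: $\hat{Y}$ is a predicted label, $A$ a true sensitive attribute, $\hat{A}$ a predicted sensitive attribute. *)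

From HB Require Import structures.
From mathcomp Require Import all_boot all_order all_algebra.
From mathcomp Require Import all_classical all_reals all_analysis.
Set Implicit Arguments. Unset Strict Implicit. Unset Printing Implicit Defensive.
Import Order.TTheory GRing.Theory Num.Theory.
Local Open Scope classical_set_scope.
Local Open Scope ring_scope.

Section Defs.
Variable R : realType.

Definition lpnorm (p : R) (Z : finType) (f : Z -> R) : R :=
  (\sum_(z : Z) `|f z| `^ p) `^ p^-1.

Definition onehot (Z : finType) (z : Z) : Z -> R :=
  fun z' => if z' == z then 1 else 0.

Definition concat (Y A : finType) (f : Y -> R) (g : A -> R) : (Y + A)%type -> R :=
  fun s => match s with inl u => f u | inr v => g v end.

Definition pair_dist (p : R) (Y A : finType) (z z' : (Y * A)%type) : R :=
  lpnorm p (concat (fun u => onehot z.1 u - onehot z'.1 u)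
                   (fun v => onehot z.2 v - onehot z'.2 v)).

Definition coupling (Z : finType) (mu nu : Z -> R) (pi : Z -> Z -> R) : Prop :=
  [/\ forall z z', 0 <= pi z z',
      forall z, \sum_(z' : Z) pi z z' = mu z &
      forall z', \sum_(z : Z) pi z z' = nu z'].

Definition W1 (Z : finType) (dist : Z -> Z -> R) (mu nu : Z -> R) : R :=
  inf [set c | exists pi, coupling mu nu pi /\
               c = \sum_(z : Z) \sum_(z' : Z) pi z z' * dist z z'].

Variables (d : measure_display) (T : measurableType d) (P : probability T R).

Definition law (Y : finType) (U : T -> Y) (y : Y) : R := fine (P (U @^-1` [set y])).
Definition joint_law (Y A : finType) (U : T -> Y) (V : T -> A) (z : (Y * A)%type) : R :=
  fine (P (U @^-1` [set z.1] `&` V @^-1` [set z.2])).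

Definition IW (p : R) (Y A : finType) (U : T -> Y) (V : T -> A) : R :=
  W1 (@pair_dist p Y A) (joint_law U V) (fun z => law U z.1 * law V z.2).

End Defs.

From HB Require Import structures.
From mathcomp Require Import all_boot all_order all_algebra.
From mathcomp Require Import all_classical all_reals all_analysis.
From mathcomp Require Import lra.
Set Implicit Arguments. Unset Strict Implicit. Unset Printing Implicit Defensive.
Import Order.TTheory GRing.Theory Num.Theory.
Local Open Scope classical_set_scope.
Local Open Scope ring_scope.

(* I_W is W_1 between the joint law and the product of the marginals, and
   W_1 obeys a triangle inequality through couplings: glue a coupling of
   p(Yh,A) with p(Yh,Ah), any coupling of p(Yh,Ah) with p(Yh)p(Ah), and a
   coupling of p(Yh)p(Ah) with p(Yh)p(A).  For the two outer ones keep the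
   Yh-coordinate and exchange A and Ah along their joint law (jointly with Yh
   for the first, independently of Yh for the second).  A point then moves
   only when A <> Ah, and by exactly 2^(1/p) in the concatenated one-hot l_p
   metric, so each of the two costs 2^(1/p) P(A <> Ah). *)

Lemma exchange_big22 (R : Type) (idx : R) (op : Monoid.com_law idx)
    (I J K L : finType) (F : I -> J -> K -> L -> R) :
  \big[op/idx]_i \big[op/idx]_j \big[op/idx]_k \big[op/idx]_l F i j k l =
  \big[op/idx]_k \big[op/idx]_l \big[op/idx]_i \big[op/idx]_j F i j k l.
Proof.
under eq_bigr do rewrite exchange_big /=.
rewrite exchange_big /=; apply: eq_bigr => k _.
by under eq_bigr do rewrite exchange_big /=; rewrite exchange_big.
Qed.

Section Couplings.
Variables (R : realType) (Z : finType).
Implicit Types (mu nu : Z -> R) (pi : Z -> Z -> R) (dist : Z -> Z -> R).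

Definition transport_cost dist pi : R := \sum_z \sum_z' pi z z' * dist z z'.

Lemma coupling_ge0l {mu nu pi z} : coupling mu nu pi -> 0 <= mu z.
Proof. by case=> pi_ge0 <- _; exact: sumr_ge0. Qed.

Lemma coupling_ge0r {mu nu pi z} : coupling mu nu pi -> 0 <= nu z.
Proof. by case=> pi_ge0 _ <-; exact: sumr_ge0. Qed.

Lemma coupling_eq0l {mu nu pi z z'} : coupling mu nu pi -> mu z = 0 -> pi z z' = 0.
Proof.
case=> pi_ge0 pi_row _ mu0; move: (pi_row z); rewrite mu0 => /psumr_eq0P.
by apply=> // ? _.
Qed.

Lemma coupling_eq0r {mu nu pi z z'} : coupling mu nu pi -> nu z' = 0 -> pi z z' = 0.
Proof.
case=> pi_ge0 _ pi_col nu0; move: (pi_col z'); rewrite nu0 => /psumr_eq0P.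
by apply=> // ? _.
Qed.

Lemma transport_cost_ge0 dist mu nu pi : (forall z z', 0 <= dist z z') ->
  coupling mu nu pi -> 0 <= transport_cost dist pi.
Proof.
move=> dist_ge0 [pi_ge0 _ _]; do 2!(apply: sumr_ge0 => ? _).
exact: mulr_ge0.
Qed.

Lemma W1_le_transport_cost dist mu nu pi : (forall z z', 0 <= dist z z') ->
  coupling mu nu pi -> W1 dist mu nu <= transport_cost dist pi.
Proof.
move=> dist_ge0 pi_cpl; apply: ge_inf; last by exists pi.
exists 0 => _ [pi' [pi'_cpl ->]]; exact: transport_cost_ge0 pi'_cpl.
Qed.

Lemma product_coupling mu nu : (forall z, 0 <= mu z) -> (forall z, 0 <= nu z) ->
  \sum_z mu z = 1 -> \sum_z nu z = 1 -> coupling mu nu (fun z z' => mu z * nu z').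
Proof.
move=> mu_ge0 nu_ge0 mu1 nu1; split=> [z z'|z|z'].
- exact: mulr_ge0.
- by rewrite -mulr_sumr nu1 mulr1.
- by rewrite -mulr_suml mu1 mul1r.
Qed.

Section Gluing.
Variables (dist : Z -> Z -> R) (mu1 mu2 nu2 nu1 : Z -> R) (sig pi tau : Z -> Z -> R).
Hypotheses (sig_cpl : coupling mu1 mu2 sig) (pi_cpl : coupling mu2 nu2 pi)
  (tau_cpl : coupling nu2 nu1 tau).

(* The law of a Markov chain x2 -> x, x2 -> z2 -> z whose pairs (x, x2),
   (x2, z2), (z2, z) have laws [sig], [pi], [tau].  Division by a null mass
   returns 0, which is harmless: the matching entries of [pi] vanish. *)
Definition chain x x2 z2 z : R :=
  sig x x2 / mu2 x2 * pi x2 z2 * (tau z2 z / nu2 z2).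

Definition glue x z : R := \sum_x2 \sum_z2 chain x x2 z2 z.

Lemma chain_ge0 x x2 z2 z : 0 <= chain x x2 z2 z.
Proof.
have [sig_ge0 _ _] := sig_cpl; have [pi_ge0 _ _] := pi_cpl.
have [tau_ge0 _ _] := tau_cpl.
rewrite /chain !mulr_ge0 ?invr_ge0 //.
- exact: coupling_ge0r sig_cpl.
- exact: coupling_ge0l tau_cpl.
Qed.

Lemma sum_chain_z x x2 z2 : \sum_z chain x x2 z2 z = sig x x2 / mu2 x2 * pi x2 z2.
Proof.
rewrite /chain -mulr_sumr -mulr_suml.
have [nu0|nu_neq0] := eqVneq (nu2 z2) 0.
  by rewrite (coupling_eq0r pi_cpl nu0) mulr0 mul0r.
by case: tau_cpl => _ -> _; rewrite divff // mulr1.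
Qed.

Lemma sum_chain_x x2 z2 z :
  \sum_x chain x x2 z2 z = pi x2 z2 * (tau z2 z / nu2 z2).
Proof.
rewrite /chain -!mulr_suml.
have [mu0|mu_neq0] := eqVneq (mu2 x2) 0.
  by rewrite (coupling_eq0l pi_cpl mu0) !(mulr0, mul0r).
by case: sig_cpl => _ _ ->; rewrite divff // mul1r.
Qed.

Lemma chain_marginal12 x x2 : \sum_z2 \sum_z chain x x2 z2 z = sig x x2.
Proof.
under eq_bigr do rewrite sum_chain_z.
rewrite -mulr_sumr; case: pi_cpl => _ -> _.
have [mu0|mu_neq0] := eqVneq (mu2 x2) 0; last by rewrite divfK.
by rewrite mu0 mulr0 (coupling_eq0r sig_cpl mu0).
Qed.

Lemma chain_marginal23 x2 z2 : \sum_x \sum_z chain x x2 z2 z = pi x2 z2.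
Proof.
rewrite exchange_big /=; under eq_bigr do rewrite sum_chain_x.
rewrite -mulr_sumr -mulr_suml.
have [nu0|nu_neq0] := eqVneq (nu2 z2) 0.
  by rewrite (coupling_eq0r pi_cpl nu0) mul0r.
by case: tau_cpl => _ -> _; rewrite divff // mulr1.
Qed.

Lemma chain_marginal34 z2 z : \sum_x \sum_x2 chain x x2 z2 z = tau z2 z.
Proof.
rewrite exchange_big /=; under eq_bigr do rewrite sum_chain_x.
rewrite -mulr_suml; case: pi_cpl => _ _ ->.
have [nu0|nu_neq0] := eqVneq (nu2 z2) 0; last by rewrite mulrC divfK.
by rewrite nu0 mul0r (coupling_eq0l tau_cpl nu0).
Qed.

Lemma glue_coupling : coupling mu1 nu1 glue.
Proof.
split.
- by move=> x z; do 2!(apply: sumr_ge0 => ? _); exact: chain_ge0.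
- move=> x; rewrite exchange_big /=; case: sig_cpl => _ <- _.
  by apply: eq_bigr => x2 _; rewrite -chain_marginal12 exchange_big.
- move=> z; case: tau_cpl => _ _ <-; rewrite /glue.
  under eq_bigr do rewrite exchange_big /=.
  rewrite exchange_big /=.
  by apply: eq_bigr => z2 _; rewrite -chain_marginal34.
Qed.

Lemma glue_transport_cost :
  (forall x y z, dist x z <= dist x y + dist y z) ->
  transport_cost dist glue <=
    transport_cost dist sig + transport_cost dist pi + transport_cost dist tau.
Proof.
move=> dist_tri.
pose S (F : Z -> Z -> Z -> Z -> R) := \sum_x \sum_x2 \sum_z2 \sum_z F x x2 z2 z.
have cost_glue : transport_cost dist glue = S (fun x x2 z2 z => chain x x2 z2 z * dist x z).
  apply: eq_bigr => x _; under eq_bigr do rewrite mulr_suml.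
  rewrite exchange_big /=; apply: eq_bigr => x2 _.
  by under eq_bigr do rewrite mulr_suml; rewrite exchange_big.
have cost_sig : transport_cost dist sig = S (fun x x2 z2 z => chain x x2 z2 z * dist x x2).
  apply: eq_bigr => x _; apply: eq_bigr => x2 _.
  by rewrite -chain_marginal12 !mulr_suml; apply: eq_bigr => z2 _; rewrite mulr_suml.
have cost_pi : transport_cost dist pi = S (fun x x2 z2 z => chain x x2 z2 z * dist x2 z2).
  rewrite /S exchange_big /=; apply: eq_bigr => x2 _; rewrite exchange_big /=.
  apply: eq_bigr => z2 _; rewrite -chain_marginal23 mulr_suml.
  by apply: eq_bigr => x _; rewrite mulr_suml.
have cost_tau : transport_cost dist tau = S (fun x x2 z2 z => chain x x2 z2 z * dist z2 z).
  rewrite /S exchange_big22; apply: eq_bigr => z2 _; apply: eq_bigr => z _.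
  rewrite -chain_marginal34 mulr_suml.
  by apply: eq_bigr => x _; rewrite mulr_suml.
rewrite cost_glue cost_sig cost_pi cost_tau /S -!big_split /=.
do 4!(apply: ler_sum => ? _; rewrite -?big_split /=).
rewrite -!mulrDr ler_wpM2l ?chain_ge0 //.
by rewrite -addrA; apply: le_trans (dist_tri _ _ _) (lerD (lexx _) (dist_tri _ _ _)).
Qed.

End Gluing.

Lemma W1_le_glue dist mu1 mu2 nu2 nu1 sig tau :
  (forall z z', 0 <= dist z z') ->
  (forall x y z, dist x z <= dist x y + dist y z) ->
  coupling mu1 mu2 sig -> coupling nu2 nu1 tau ->
  (exists pi, coupling mu2 nu2 pi) ->
  W1 dist mu1 nu1 <=
    transport_cost dist sig + W1 dist mu2 nu2 + transport_cost dist tau.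
Proof.
move=> dist_ge0 dist_tri sig_cpl tau_cpl [pi0 pi0_cpl].
rewrite -lerBlDr -lerBlDl; apply: lb_le_inf; first by exists (transport_cost dist pi0), pi0.
move=> _ [pi [pi_cpl ->]]; rewrite -/(transport_cost dist pi).
have := W1_le_transport_cost dist_ge0 (glue_coupling sig_cpl pi_cpl tau_cpl).
have := glue_transport_cost sig_cpl pi_cpl tau_cpl dist_tri.
lra.
Qed.

End Couplings.

Section PowR.
Variable R : realType.

Lemma le_powR_id (a q : R) : 0 <= a <= 1 -> q <= 1 -> a <= a `^ q.
Proof.
case/andP=> a_ge0 a_le1 q_le1; have [->|a_neq0] := eqVneq a 0; first exact: powR_ge0.
by apply: ger1_powR => //; rewrite a_le1 andbT lt0r a_neq0.
Qed.

Lemma powR_subadditive (q s t : R) : 0 < q <= 1 -> 0 <= s -> 0 <= t ->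
  (s + t) `^ q <= s `^ q + t `^ q.
Proof.
case/andP=> q_gt0 q_le1 s_ge0 t_ge0.
have [st0|st_neq0] := eqVneq (s + t) 0.
  have [-> ->] : s = 0 /\ t = 0 by split; lra.
  by rewrite addr0 powR0 ?gt_eqF // addr0.
set u := s + t; have u_gt0 : 0 < u by rewrite lt0r st_neq0 addr_ge0.
have scaled_le a : 0 <= a <= u -> a / u * u `^ q <= a `^ q.
  case/andP=> a_ge0 a_le_u.
  have au_ge0 : 0 <= a / u by rewrite divr_ge0 // ltW.
  rewrite -{2}(divfK (lt0r_neq0 u_gt0) a) powRM //; last exact: ltW.
  apply: ler_wpM2r; first exact: powR_ge0.
  by rewrite le_powR_id // au_ge0 /= ler_pdivrMr // mul1r.
have -> : u `^ q = s / u * u `^ q + t / u * u `^ q.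
  by rewrite -mulrDl -mulrDl divff ?gt_eqF // mul1r.
by apply: lerD; apply: scaled_le; rewrite /u; apply/andP; split => //; lra.
Qed.

End PowR.

Lemma neq_triangle (T : eqType) (x y z : T) :
  ((x != z) <= (x != y) + (y != z))%N.
Proof.
have [->|_] := eqVneq x y; first by rewrite add0n.
by rewrite (leq_trans (leq_b1 _)) ?leq_addr.
Qed.

Definition hamming (Y A : finType) (z z' : Y * A) : nat :=
  ((z.1 != z'.1) + (z.2 != z'.2))%N.

Lemma hamming_triangle (Y A : finType) (x y z : Y * A) :
  (hamming x z <= hamming x y + hamming y z)%N.
Proof.
rewrite /hamming addnACA.
by apply: leq_add; exact: neq_triangle.
Qed.

Section PairDist.
Variable R : realType.

Lemma sum_powR_onehotB (Z : finType) (p : R) (z z' : Z) : 0 < p ->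
  \sum_u `|onehot R z u - onehot R z' u| `^ p = 2 * (z != z')%:R.
Proof.
move=> p_gt0; have [<-|z_neq] := eqVneq z z'.
  by rewrite mulr0 big1 // => u _; rewrite subrr normr0 powR0 ?gt_eqF.
rewrite (bigD1 z) //= (bigD1 z') 1?eq_sym //= big1; last first.
  move=> u /andP[u_neq' u_neq].
  by rewrite /onehot (negbTE u_neq) (negbTE u_neq') subrr normr0 powR0 ?gt_eqF.
rewrite /onehot eqxx (negbTE z_neq) eq_sym (negbTE z_neq) eqxx.
rewrite subr0 sub0r normrN normr1 powR1 addr0 mulr1; lra.
Qed.

Lemma pair_distE (p : R) (Y A : finType) (z z' : Y * A) : 0 < p ->
  pair_dist p z z' = (2 * (hamming z z')%:R) `^ p^-1.
Proof.
move=> p_gt0; rewrite /pair_dist /lpnorm big_sumType /=.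
by rewrite !sum_powR_onehotB // natrD mulrDr.
Qed.

Lemma pair_dist_ge0 (p : R) (Y A : finType) (z z' : Y * A) : 0 <= pair_dist p z z'.
Proof. exact: powR_ge0. Qed.

Lemma pair_dist_triangle (p : R) (Y A : finType) (x y z : Y * A) : 1 <= p ->
  pair_dist p x z <= pair_dist p x y + pair_dist p y z.
Proof.
move=> p_ge1; have p_gt0 : 0 < p by lra.
have q_gt0 : 0 < p^-1 by rewrite invr_gt0.
have q_le1 : p^-1 <= 1 by rewrite invr_le1 // unitfE gt_eqF.
rewrite !pair_distE //; apply: le_trans (powR_subadditive _ _ _); last 3 first.
- by rewrite q_gt0.
- by rewrite mulr_ge0.
- by rewrite mulr_ge0.
apply: ge0_ler_powR; rewrite ?nnegrE ?addr_ge0 ?mulr_ge0 //; first exact: ltW.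
by rewrite -mulrDr -natrD ler_wpM2l // ler_nat hamming_triangle.
Qed.

End PairDist.

Lemma fsbig_setT_finType (R : Type) (idx : R) (op : Monoid.com_law idx)
    (I : finType) (F : I -> R) :
  \big[op/idx]_(i \in [set: I]) F i = \big[op/idx]_i F i.
Proof.
rewrite (fsbigE (index_enum I)) ?index_enum_uniq //.
  by apply: eq_bigl => i; rewrite in_setT.
by move=> i _; rewrite mem_index_enum.
Qed.

Section Partition.
Variables (R : realType) (d : measure_display) (T : measurableType d).

Lemma measure_partition (mu : {measure set T -> \bar R}) (I : finType) (V : T -> I)
    (S : set T) :
  (forall i, measurable (V @^-1` [set i])) -> measurable S ->
  mu S = (\sum_i mu (S `&` V @^-1` [set i]))%E.
Proof.
move=> mV mS; rewrite -fsbig_setT_finType -measure_fin_bigcup //.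
- congr (mu _); apply/seteqP; split=> [w Sw|w [i _ []//]].
  by exists (V w).
- exact: finite_finset.
- exact: trivIset_preimage1_in.
- by move=> i _; exact: measurableI.
Qed.

End Partition.

Local Notation measurable_fibers V := (forall i, measurable (V @^-1` [set i])).

Section Laws.
Variables (R : realType) (d : measure_display) (T : measurableType d)
  (P : probability T R).

Lemma fine_prob_partition (I : finType) (V : T -> I) (S : set T) :
  measurable_fibers V -> measurable S ->
  fine (P S) = \sum_i fine (P (S `&` V @^-1` [set i])).
Proof.
move=> mV mS; rewrite (measure_partition P mV mS) sum_fine // => i _.
by apply: fin_num_measure; exact: measurableI.
Qed.

Lemma law_ge0 (I : finType) (V : T -> I) i : 0 <= law P V i.
Proof. exact/fine_ge0/measure_ge0. Qed.

Lemma joint_law_ge0 (I J : finType) (U : T -> I) (V : T -> J) z :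
  0 <= joint_law P U V z.
Proof. exact/fine_ge0/measure_ge0. Qed.

Lemma sum_law (I : finType) (V : T -> I) : measurable_fibers V -> \sum_i law P V i = 1.
Proof.
move=> mV; rewrite /law.
under eq_bigr do rewrite -[V @^-1` _]setTI.
by rewrite -fine_prob_partition // probability_setT.
Qed.

Lemma sum_joint_law1 (I J : finType) (U : T -> I) (V : T -> J) j :
  measurable_fibers U -> measurable_fibers V ->
  \sum_i joint_law P U V (i, j) = law P V j.
Proof.
move=> mU mV; rewrite /law (fine_prob_partition mU (mV j)).
by apply: eq_bigr => i _; rewrite /joint_law setIC.
Qed.

Lemma sum_joint_law2 (I J : finType) (U : T -> I) (V : T -> J) i :
  measurable_fibers U -> measurable_fibers V ->
  \sum_j joint_law P U V (i, j) = law P U i.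
Proof. by move=> mU mV; rewrite /law (fine_prob_partition mV (mU i)). Qed.

Definition triple_law (I J K : finType) (U : T -> I) (V : T -> J) (W : T -> K)
  i j k : R :=
  fine (P (U @^-1` [set i] `&` V @^-1` [set j] `&` W @^-1` [set k])).

Section TripleLaw.
Variables (I J K : finType) (U : T -> I) (V : T -> J) (W : T -> K).
Hypotheses (mU : measurable_fibers U) (mV : measurable_fibers V)
  (mW : measurable_fibers W).

Lemma triple_law_ge0 i j k : 0 <= triple_law U V W i j k.
Proof. exact/fine_ge0/measure_ge0. Qed.

Lemma sum_triple_law3 i j : \sum_k triple_law U V W i j k = joint_law P U V (i, j).
Proof. by rewrite /joint_law (fine_prob_partition mW) //; exact: measurableI. Qed.

Lemma sum_triple_law2 i k : \sum_j triple_law U V W i j k = joint_law P U W (i, k).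
Proof.
rewrite /joint_law (fine_prob_partition mV) /=; last exact: measurableI.
by apply: eq_bigr => j _; rewrite /triple_law setIAC.
Qed.

Lemma sum_triple_law1 j k : \sum_i triple_law U V W i j k = joint_law P V W (j, k).
Proof.
rewrite /joint_law (fine_prob_partition mU) /=; last exact: measurableI.
by apply: eq_bigr => i _; rewrite setIC setIA.
Qed.

End TripleLaw.

Lemma measurable_neq (I : finType) (V W : T -> I) :
  measurable_fibers V -> measurable_fibers W -> measurable [set w | V w <> W w].
Proof.
move=> mV mW.
have -> : [set w | V w <> W w] = \bigcup_(i in [set: I]) (V @^-1` [set i] `\` W @^-1` [set i]).
  apply/seteqP; split=> [w VWw|w [i _ [/= -> /nesym]]] //.
  by exists (V w) => //; split => //= /nesym.
apply: fin_bigcup_measurable; first exact: finite_finset.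
by move=> i _; exact: measurableD.
Qed.

Lemma prob_neqE (I : finType) (V W : T -> I) :
  measurable_fibers V -> measurable_fibers W ->
  fine (P [set w | V w <> W w]) =
    \sum_i \sum_j (i != j)%:R * joint_law P V W (i, j).
Proof.
move=> mV mW; have mE := measurable_neq mV mW.
rewrite (fine_prob_partition mV mE); apply: eq_bigr => i _.
rewrite (fine_prob_partition mW); last exact: measurableI.
apply: eq_bigr => j _; rewrite /joint_law /=.
have [<-|ij] := eqVneq i j.
  rewrite mul0r; suff -> : [set w | V w <> W w] `&` V @^-1` [set i] `&` W @^-1` [set i] = set0.
    by rewrite measure0.
  by apply/seteqP; split=> // w [[/= VW Vw] Ww]; apply: VW; rewrite Vw Ww.
rewrite mul1r; congr (fine (P _)); apply/seteqP; split=> [w [[]]|w [/= Vw Ww]] //.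
by split=> //; split=> //=; rewrite Vw Ww; apply/eqP.
Qed.

End Laws.

Lemma sum_pairE (M : nmodType) (I J : finType) (F : I * J -> M) :
  \sum_z F z = \sum_i \sum_j F (i, j).
Proof. by rewrite pair_bigA; apply: eq_bigr => -[]. Qed.

Section FiberCoupling.
Variables (R : realType) (Y X : finType) (k : Y -> X -> X -> R).

Definition fiber_coupling (z z' : Y * X) : R :=
  if z.1 == z'.1 then k z.1 z.2 z'.2 else 0.

Lemma sum_fiber_couplingr (f : Y * X -> R) z :
  \sum_z' fiber_coupling z z' * f z' = \sum_a k z.1 z.2 a * f (z.1, a).
Proof.
rewrite sum_pairE (bigD1 z.1) //= [X in _ + X]big1 ?addr0 => [|y /negPf y_neq].
  by apply: eq_bigr => a _; rewrite /fiber_coupling eqxx.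
by apply: big1 => a _; rewrite /fiber_coupling eq_sym y_neq mul0r.
Qed.

Lemma sum_fiber_couplingl (f : Y * X -> R) z' :
  \sum_z fiber_coupling z z' * f z = \sum_a k z'.1 a z'.2 * f (z'.1, a).
Proof.
rewrite sum_pairE (bigD1 z'.1) //= [X in _ + X]big1 ?addr0 => [|y /negPf y_neq].
  by apply: eq_bigr => a _; rewrite /fiber_coupling eqxx.
by apply: big1 => a _; rewrite /fiber_coupling y_neq mul0r.
Qed.

Lemma fiber_couplingP (mu nu : Y * X -> R) :
  (forall y a a', 0 <= k y a a') ->
  (forall y a, \sum_a' k y a a' = mu (y, a)) ->
  (forall y a', \sum_a k y a a' = nu (y, a')) ->
  coupling mu nu fiber_coupling.
Proof.
move=> k_ge0 k_mu k_nu; split.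
- by move=> z z'; rewrite /fiber_coupling; case: ifP.
- move=> [y a]; rewrite -k_mu.
  under eq_bigr do rewrite -[fiber_coupling _ _]mulr1.
  by rewrite sum_fiber_couplingr; under eq_bigr do rewrite mulr1.
- move=> [y a']; rewrite -k_nu.
  under eq_bigr do rewrite -[fiber_coupling _ _]mulr1.
  by rewrite sum_fiber_couplingl; under eq_bigr do rewrite mulr1.
Qed.

Lemma transport_cost_fiber_coupling (p : R) : 0 < p ->
  transport_cost (@pair_dist R p Y X) fiber_coupling =
    2 `^ p^-1 * \sum_y \sum_a \sum_a' (a != a')%:R * k y a a'.
Proof.
move=> p_gt0; rewrite /transport_cost sum_pairE mulr_sumr; apply: eq_bigr => y _.
rewrite mulr_sumr; apply: eq_bigr => a _; rewrite sum_fiber_couplingr mulr_sumr.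
apply: eq_bigr => a' _; rewrite pair_distE // /hamming /= eqxx add0n.
have [<-|_] /= := eqVneq a a'; last by rewrite mulr1 mul1r mulrC.
by rewrite mulr0 powR0 ?mul0r ?mulr0 // invr_eq0 gt_eqF.
Qed.

End FiberCoupling.

Section DependencyCouplings.
Variables (R : realType) (d : measure_display) (T : measurableType d)
  (P : probability T R) (Y X : finType) (U : T -> Y) (V V' : T -> X).
Hypotheses (mU : measurable_fibers U) (mV : measurable_fibers V)
  (mV' : measurable_fibers V').

Lemma coupling_joint_law :
  coupling (joint_law P U V) (joint_law P U V') (fiber_coupling (triple_law P U V V')).
Proof.
apply: fiber_couplingP => [y a a'|y a|y a'].
- exact: triple_law_ge0.
- exact: sum_triple_law3.
- exact: sum_triple_law2.
Qed.

Lemma transport_cost_joint_law (p : R) : 0 < p ->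
  transport_cost (@pair_dist R p Y X) (fiber_coupling (triple_law P U V V')) =
    2 `^ p^-1 * fine (P [set w | V w <> V' w]).
Proof.
move=> p_gt0; rewrite transport_cost_fiber_coupling // prob_neqE //; congr (_ * _).
rewrite exchange_big /=; apply: eq_bigr => a _.
rewrite exchange_big /=; apply: eq_bigr => a' _.
by rewrite -mulr_sumr sum_triple_law1.
Qed.

Lemma coupling_product_law :
  coupling (fun z => law P U z.1 * law P V' z.2) (fun z => law P U z.1 * law P V z.2)
    (fiber_coupling (fun y a' a => law P U y * joint_law P V V' (a, a'))).
Proof.
apply: fiber_couplingP => [y a' a|y a'|y a].
- by rewrite mulr_ge0 ?law_ge0 ?joint_law_ge0.
- by rewrite -mulr_sumr sum_joint_law1.
- by rewrite -mulr_sumr sum_joint_law2.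
Qed.

Lemma transport_cost_product_law (p : R) : 0 < p ->
  transport_cost (@pair_dist R p Y X)
    (fiber_coupling (fun y a' a => law P U y * joint_law P V V' (a, a'))) =
    2 `^ p^-1 * fine (P [set w | V w <> V' w]).
Proof.
move=> p_gt0; rewrite transport_cost_fiber_coupling // prob_neqE //; congr (_ * _).
transitivity (\sum_y law P U y * \sum_a \sum_a' (a != a')%:R * joint_law P V V' (a, a')).
  apply: eq_bigr => y _; rewrite exchange_big mulr_sumr; apply: eq_bigr => a _.
  by rewrite mulr_sumr; apply: eq_bigr => a' _; rewrite eq_sym mulrCA.
by rewrite -mulr_suml sum_law // mul1r.
Qed.

Lemma exists_coupling_joint_product_law :
  exists pi, coupling (joint_law P U V') (fun z => law P U z.1 * law P V' z.2) pi.
Proof.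
eexists; apply: product_coupling => [z|z||].
- exact: joint_law_ge0.
- by rewrite mulr_ge0 ?law_ge0.
- by rewrite sum_pairE; under eq_bigr do rewrite sum_joint_law2 //; exact: sum_law.
- rewrite sum_pairE; under eq_bigr do rewrite /= -mulr_sumr sum_law // mulr1.
  exact: sum_law.
Qed.

End DependencyCouplings.

Theorem lemma2 (R : realType) (d : measure_display) (T : measurableType d)
  (P : probability T R) (Ys As : finType) (p : R) (hp : 1 <= p)
  (Yh : T -> Ys) (A Ah : T -> As)
  (mYh : forall y, measurable (Yh @^-1` [set y]))
  (mA : forall a, measurable (A @^-1` [set a]))
  (mAh : forall a, measurable (Ah @^-1` [set a])) :
  IW P p Yh A <= IW P p Yh Ah + 2 * 2 `^ p^-1 * fine (P [set w | A w <> Ah w]).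
Proof.
have p_gt0 : 0 < p := lt_le_trans ltr01 hp.
rewrite /IW; apply: le_trans (W1_le_glue _ _ (coupling_joint_law P mYh mA mAh)
  (coupling_product_law P Yh mA mAh) (exists_coupling_joint_product_law P mYh mAh)) _.
- exact: pair_dist_ge0.
- by move=> x y z; exact: pair_dist_triangle.
by rewrite transport_cost_joint_law // transport_cost_product_law //; lra.
Qed.
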